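(* Let $\mathbb{C}$ be a generalized 2-category. Let $\alpha\colon \mathrm{id}_{A'}\to\mathrm{id}_A$, $\beta\colon \mathrm{id}_{B'}\to\mathrm{id}_B$ and $\gamma\colon\mathrm{id}_{C'}\to\mathrm{id}_C$ be 2-cells, and let $f\colon A\to B$, $g\colon B\to C$, $f'\colon A'\to B'$, $g'\colon B'\to C'$ be 1-cells. Then there exists at least one 2-cell $$ g{\downarrow_{\beta,\gamma}}\circ f{\downarrow_{\alpha,\beta}} \;\longrightarrow\; (g\circ f){\downarrow_{\alpha,\gamma}}$$ and at least one 2-cell $$ (g'\circ f'){\uparrow^{\alpha,\gamma}} \;\longrightarrow\; g'{\uparrow^{\beta,\gamma}}\circ f'{\uparrow^{\alpha,\beta}}.$$
   Context: A generalized 2-category $\mathbb{C}$ consists of: (i) a category $\mathbb{C}_1$, whose objects are the 0-cells and whose arrows are the 1-cells of $\mathbb{C}$ (composition written $g\circ f$, identities $\mathrm{id}_A$); (ii) a category $\mathbb{C}_v$ whose objects are the 1-cells of $\mathbb{C}$ and whose arrows are called 2-cells; a 2-cell $f\to g$ may exist between non-parallel 1-cells (domains/codomains of $f,g$ in $\mathbb{C}_1$ may differ); composition in $\mathbb{C}_v$ is called vertical composition and written $\circ$; (iii) an associative horizontal composition: for 1-cells $f_1\colon A_1\to B_1$, $f_2\colon B_1\to C_1$, $g_1\colon A_2\to B_2$, $g_2\colon B_2\to C_2$ and 2-cells $\alpha\colon f_1\to g_1$, $\beta\colon f_2\to g_2$, a 2-cell $\beta\star\alpha\colon f_2\circ f_1\to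 g_2\circ g_1$, satisfying the interchange law $(\alpha_2\star\beta_2)\circ(\alpha_1\star\beta_1)=(\alpha_2\circ\alpha_1)\star(\beta_2\circ\beta_1)$ whenever defined; (iv) operations $\nabla$ and $\triangle$: for 2-cells $\alpha\colon\mathrm{id}_{A'}\to\mathrm{id}_A$ and $\beta\colon\mathrm{id}_{B'}\to\mathrm{id}_B$, let $\mathbb{C}_{\alpha,\beta}$ be the subcategory of $\mathbb{C}_v$ whose objects are the 1-cells $A\to B$ and the 1-cells $A'\to B'$, and whose arrows are all 2-cells between 1-cells $A\to B$, all 2-cells between 1-cells $A'\to B'$, and all 2-cells $\gamma$ from a 1-cell $A'\to B'$ to a 1-cell $A\to B$ satisfying $\gamma\star\alpha=\beta\star\gamma=\gamma$. Let $\mathbf U$, $\mathbf U'$ be the inclusions into $\mathbb{C}_{\alpha,\beta}$ of the full subcategories of $\mathbb{C}_v$ on 1-cells $A\to B$, respectively $A'\to B'$. For every 1-cell $f\colon A\to B$, $\nabla_{\alpha,\beta}(f)$ is a universal arrow from $\mathbf U'$ to $f$: a 1-cell $f{\downarrow_{\alpha,\beta}}\colon A'\to B'$ and a 2-cell $\nabla_{\alpha,\beta}(f)\colon f{\downarrow_{\alpha,\beta}}\to f$ in $\mathbb{C}_{\alpha,\beta}$ such that every arrow $h\to f$ of $\mathbb{C}_{\alpha,\beta}$ with $h\colon A'\to B'$ factors uniquely as $\nabla_{\alpha,\beta}(f)\circ\delta$ with $\delta\colon h\to f{\downarrow_{\alpha,\beta}}$. Dually, for every 1-cell $f'\colon A'\to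 B'$, $\triangle_{\alpha,\beta}(f')\colon f'\to f'{\uparrow^{\alpha,\beta}}$ (with $f'{\uparrow^{\alpha,\beta}}\colon A\to B$) is a universal arrow from $f'$ to $\mathbf U$. These satisfy $\nabla_{\mathrm{id}_{\mathrm{id}},\beta}(f)\star\nabla_{\alpha,\mathrm{id}_{\mathrm{id}}}(g)=\nabla_{\alpha,\beta}(f\circ g)$ and $\triangle_{\mathrm{id}_{\mathrm{id}},\beta}(f)\star\triangle_{\alpha,\mathrm{id}_{\mathrm{id}}}(g)=\triangle_{\alpha,\beta}(f\circ g)$ whenever typed, where $\mathrm{id}_{\mathrm{id}}$ denotes the identity 2-cell on the identity 1-cell of the appropriate 0-cell. Notation: $f{\downarrow_{\alpha,\beta}}$ is the domain (in $\mathbb{C}_v$) of $\nabla_{\alpha,\beta}(f)$ and $f{\uparrow^{\alpha,\beta}}$ the codomain of $\triangle_{\alpha,\beta}(f)$. *)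

From Stdlib Require Import Logic.



Record Cat1 := {
  Obj : Type;
  Hom : Obj -> Obj -> Type;
  idc : forall A : Obj, Hom A A;
  comp : forall A B C : Obj, Hom B C -> Hom A B -> Hom A C;
  comp_assoc : forall (A B C D : Obj) (h : Hom C D) (g : Hom B C) (f : Hom A B),
      comp _ _ _ h (comp _ _ _ g f) = comp _ _ _ (comp _ _ _ h g) f;
  comp_idl : forall (A B : Obj) (f : Hom A B), comp _ _ _ (idc B) f = f;
  comp_idr : forall (A B : Obj) (f : Hom A B), comp _ _ _ f (idc A) = f
}.

Arguments Hom {c} _ _.
Arguments idc {c} A.
Arguments comp {c A B C} _ _.
Arguments comp_assoc {c A B C D} h g f.
Arguments comp_idl {c A B} f.
Arguments comp_idr {c A B} f.

(* type of families of 2-cells: a 2-cell f -> g may exist between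
   non-parallel 1-cells f : A -> B and g : A' -> B' *)
Definition CellFam (C : Cat1) :=
  forall (A B A' B' : Obj C), Hom A B -> Hom A' B' -> Type.

Definition cast_cell (C : Cat1) (Cell : CellFam C) (A B A' B' : Obj C)
  (f f1 : Hom A B) (g g1 : Hom A' B') (e1 : f = f1) (e2 : g = g1)
  (x : Cell _ _ _ _ f g) : Cell _ _ _ _ f1 g1 :=
  match e1 in _ = f1' return Cell _ _ _ _ f1' g1 with
  | eq_refl => match e2 in _ = g1' return Cell _ _ _ _ f g1' with
               | eq_refl => x end end.
Arguments cast_cell {C} Cell {A B A' B' f f1 g g1} e1 e2 x.

Record TwoCells (C : Cat1) := {
  Cell : CellFam C;
  vid : forall (A B : Obj C) (f : Hom A B), Cell _ _ _ _ f f;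
  vcomp : forall (A1 B1 A2 B2 A3 B3 : Obj C)
      (f : Hom A1 B1) (g : Hom A2 B2) (h : Hom A3 B3),
      Cell _ _ _ _ g h -> Cell _ _ _ _ f g -> Cell _ _ _ _ f h;
  vcomp_assoc : forall (A1 B1 A2 B2 A3 B3 A4 B4 : Obj C)
      (f1 : Hom A1 B1) (f2 : Hom A2 B2) (f3 : Hom A3 B3) (f4 : Hom A4 B4)
      (z : Cell _ _ _ _ f3 f4) (y : Cell _ _ _ _ f2 f3) (x : Cell _ _ _ _ f1 f2),
      vcomp _ _ _ _ _ _ _ _ _ z (vcomp _ _ _ _ _ _ _ _ _ y x)
      = vcomp _ _ _ _ _ _ _ _ _ (vcomp _ _ _ _ _ _ _ _ _ z y) x;
  vcomp_idl : forall (A1 B1 A2 B2 : Obj C) (f : Hom A1 B1) (g : Hom A2 B2)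
      (x : Cell _ _ _ _ f g), vcomp _ _ _ _ _ _ _ _ _ (vid _ _ g) x = x;
  vcomp_idr : forall (A1 B1 A2 B2 : Obj C) (f : Hom A1 B1) (g : Hom A2 B2)
      (x : Cell _ _ _ _ f g), vcomp _ _ _ _ _ _ _ _ _ x (vid _ _ f) = x;
  (* for beta : f2 -> g2 and alpha : f1 -> g1, hcomp beta alpha = beta * alpha *)
  hcomp : forall (A1 B1 C1 A2 B2 C2 : Obj C)
      (f1 : Hom A1 B1) (f2 : Hom B1 C1) (g1 : Hom A2 B2) (g2 : Hom B2 C2),
      Cell _ _ _ _ f2 g2 -> Cell _ _ _ _ f1 g1 ->
      Cell _ _ _ _ (comp f2 f1) (comp g2 g1);
  hcomp_assoc : forall (A1 B1 C1 D1 A2 B2 C2 D2 : Obj C)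
      (f1 : Hom A1 B1) (f2 : Hom B1 C1) (f3 : Hom C1 D1)
      (g1 : Hom A2 B2) (g2 : Hom B2 C2) (g3 : Hom C2 D2)
      (z : Cell _ _ _ _ f3 g3) (y : Cell _ _ _ _ f2 g2) (x : Cell _ _ _ _ f1 g1),
      cast_cell Cell (comp_assoc f3 f2 f1) (comp_assoc g3 g2 g1)
        (hcomp _ _ _ _ _ _ _ _ _ _ z (hcomp _ _ _ _ _ _ _ _ _ _ y x))
      = hcomp _ _ _ _ _ _ _ _ _ _ (hcomp _ _ _ _ _ _ _ _ _ _ z y) x;
  interchange : forall (A1 B1 C1 A2 B2 C2 A3 B3 C3 : Obj C)
      (f1 : Hom B1 C1) (f2 : Hom B2 C2) (f3 : Hom B3 C3)
      (k1 : Hom A1 B1) (k2 : Hom A2 B2) (k3 : Hom A3 B3)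
      (a1 : Cell _ _ _ _ f1 f2) (a2 : Cell _ _ _ _ f2 f3)
      (b1 : Cell _ _ _ _ k1 k2) (b2 : Cell _ _ _ _ k2 k3),
      vcomp _ _ _ _ _ _ _ _ _ (hcomp _ _ _ _ _ _ _ _ _ _ a2 b2)
                              (hcomp _ _ _ _ _ _ _ _ _ _ a1 b1)
      = hcomp _ _ _ _ _ _ _ _ _ _ (vcomp _ _ _ _ _ _ _ _ _ a2 a1)
                                  (vcomp _ _ _ _ _ _ _ _ _ b2 b1)
}.

Arguments Cell {C} t {A B A' B'} _ _.
Arguments vid {C} t {A B} f.
Arguments vcomp {C} t {A1 B1 A2 B2 A3 B3 f g h} _ _.
Arguments hcomp {C} t {A1 B1 C1 A2 B2 C2 f1 f2 g1 g2} _ _.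

Section CAB.
Variables (C : Cat1) (K : TwoCells C).

Definition in_Cab (A A' B B' : Obj C)
  (alpha : Cell K (idc A') (idc A)) (beta : Cell K (idc B') (idc B))
  (h : Hom A' B') (f : Hom A B) (c : Cell K h f) : Prop :=
  (A' = A /\ B' = B) \/
  (cast_cell (@Cell _ K) (comp_idr h) (comp_idr f) (hcomp K c alpha) = c /\
   cast_cell (@Cell _ K) (comp_idl h) (comp_idl f) (hcomp K beta c) = c).

End CAB.

Arguments in_Cab {C} K {A A' B B'} alpha beta {h f} c.

Record NablaTriangle (C : Cat1) (K : TwoCells C) := {
  down : forall (A A' B B' : Obj C)
      (alpha : Cell K (idc A') (idc A)) (beta : Cell K (idc B') (idc B)),
      Hom A B -> Hom A' B';
  nabla : forall (A A' B B' : Obj C)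
      (alpha : Cell K (idc A') (idc A)) (beta : Cell K (idc B') (idc B))
      (f : Hom A B), Cell K (down _ _ _ _ alpha beta f) f;
  nabla_in : forall (A A' B B' : Obj C)
      (alpha : Cell K (idc A') (idc A)) (beta : Cell K (idc B') (idc B))
      (f : Hom A B), in_Cab K alpha beta (nabla _ _ _ _ alpha beta f);
  nabla_univ : forall (A A' B B' : Obj C)
      (alpha : Cell K (idc A') (idc A)) (beta : Cell K (idc B') (idc B))
      (f : Hom A B) (h : Hom A' B') (c : Cell K h f),
      in_Cab K alpha beta c ->
      exists! d : Cell K h (down _ _ _ _ alpha beta f),
        vcomp K (nabla _ _ _ _ alpha beta f) d = c;
  up : forall (A A' B B' : Obj C)
      (alpha : Cell K (idc A') (idc A)) (beta : Cell K (idc B') (idc B)),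
      Hom A' B' -> Hom A B;
  triangle : forall (A A' B B' : Obj C)
      (alpha : Cell K (idc A') (idc A)) (beta : Cell K (idc B') (idc B))
      (f' : Hom A' B'), Cell K f' (up _ _ _ _ alpha beta f');
  triangle_in : forall (A A' B B' : Obj C)
      (alpha : Cell K (idc A') (idc A)) (beta : Cell K (idc B') (idc B))
      (f' : Hom A' B'), in_Cab K alpha beta (triangle _ _ _ _ alpha beta f');
  triangle_univ : forall (A A' B B' : Obj C)
      (alpha : Cell K (idc A') (idc A)) (beta : Cell K (idc B') (idc B))
      (f' : Hom A' B') (k : Hom A B) (c : Cell K f' k),
      in_Cab K alpha beta c ->
      exists! d : Cell K (up _ _ _ _ alpha beta f') k,
        vcomp K d (triangle _ _ _ _ alpha beta f') = c;
  nabla_hcomp : forall (A A' X B B' : Obj C)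
      (alpha : Cell K (idc A') (idc A)) (beta : Cell K (idc B') (idc B))
      (f : Hom X B) (g : Hom A X),
      exists e : comp (down _ _ _ _ (vid K (idc X)) beta f)
                      (down _ _ _ _ alpha (vid K (idc X)) g)
                 = down _ _ _ _ alpha beta (comp f g),
        cast_cell (@Cell _ K) e eq_refl
          (hcomp K (nabla _ _ _ _ (vid K (idc X)) beta f)
                   (nabla _ _ _ _ alpha (vid K (idc X)) g))
        = nabla _ _ _ _ alpha beta (comp f g);
  triangle_hcomp : forall (A A' X B B' : Obj C)
      (alpha : Cell K (idc A') (idc A)) (beta : Cell K (idc B') (idc B))
      (f : Hom X B') (g : Hom A' X),
      exists e : comp (up _ _ _ _ (vid K (idc X)) beta f)
                      (up _ _ _ _ alpha (vid K (idc X)) g)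
                 = up _ _ _ _ alpha beta (comp f g),
        cast_cell (@Cell _ K) eq_refl e
          (hcomp K (triangle _ _ _ _ (vid K (idc X)) beta f)
                   (triangle _ _ _ _ alpha (vid K (idc X)) g))
        = triangle _ _ _ _ alpha beta (comp f g)
}.

Arguments down {C K} n {A A' B B'} alpha beta f.
Arguments nabla {C K} n {A A' B B'} alpha beta f.
Arguments up {C K} n {A A' B B'} alpha beta _.
Arguments triangle {C K} n {A A' B B'} alpha beta _.

Record GenTwoCat := {
  cat1 : Cat1;
  cells : TwoCells cat1;
  ops : NablaTriangle cat1 cells
}.

(* By the compatibility of nabla with horizontal composition, every lift
   factors through the middle object B:
     g↓[beta,gamma] = g↓[id,gamma] ∘ id_B↓[beta,id],
     f↓[alpha,beta] = id_B↓[id,beta] ∘ f↓[alpha,id],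
     (g ∘ f)↓[alpha,gamma] = g↓[id,gamma] ∘ f↓[alpha,id].
   The required 2-cell is therefore the horizontal composite of the two nablas
   at id_B, a 2-cell id_B↓[beta,id] ∘ id_B↓[id,beta] -> id_B, whiskered by
   g↓[id,gamma] and f↓[alpha,id].  The statement for up is dual. *)

Section Whiskering.
Variables (C : Cat1) (K : TwoCells C).

Definition whisker {A X Y Z : Obj C} (g : Hom Y Z) (f : Hom A X)
  {h k : Hom X Y} (x : Cell K h k) :
  Cell K (comp g (comp h f)) (comp g (comp k f)) :=
  hcomp K (vid K g) (hcomp K x (vid K f)).

Definition whisker_into_idc {A X Z : Obj C} (g : Hom X Z) (f : Hom A X)
  {h : Hom X X} (x : Cell K h (idc X)) :
  Cell K (comp g (comp h f)) (comp g f) :=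
  cast_cell (@Cell _ K) eq_refl (f_equal (comp g) (comp_idl f)) (whisker g f x).

Definition whisker_from_idc {A X Z : Obj C} (g : Hom X Z) (f : Hom A X)
  {h : Hom X X} (x : Cell K (idc X) h) :
  Cell K (comp g f) (comp g (comp h f)) :=
  cast_cell (@Cell _ K) (f_equal (comp g) (comp_idl f)) eq_refl (whisker g f x).

End Whiskering.

Section Lifts.
Variables (C : Cat1) (K : TwoCells C) (N : NablaTriangle C K).

Lemma down_comp {A A' X B B' : Obj C}
  (alpha : Cell K (idc A') (idc A)) (beta : Cell K (idc B') (idc B))
  (f : Hom X B) (g : Hom A X) :
  comp (down N (vid K (idc X)) beta f) (down N alpha (vid K (idc X)) g)
  = down N alpha beta (comp f g).
Proof. now destruct (nabla_hcomp C K N _ _ _ _ _ alpha beta f g). Qed.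

Lemma up_comp {A A' X B B' : Obj C}
  (alpha : Cell K (idc A') (idc A)) (beta : Cell K (idc B') (idc B))
  (f : Hom X B') (g : Hom A' X) :
  comp (up N (vid K (idc X)) beta f) (up N alpha (vid K (idc X)) g)
  = up N alpha beta (comp f g).
Proof. now destruct (triangle_hcomp C K N _ _ _ _ _ alpha beta f g). Qed.

Definition down_idc_counit {B B' : Obj C} (beta : Cell K (idc B') (idc B)) :
  Cell K (comp (down N beta (vid K (idc B)) (idc B))
               (down N (vid K (idc B)) beta (idc B))) (idc B) :=
  cast_cell (@Cell _ K) eq_refl (comp_idl (idc B))
    (hcomp K (nabla N _ _ _) (nabla N _ _ _)).

Definition up_idc_unit {B B' : Obj C} (beta : Cell K (idc B') (idc B)) :
  Cell K (idc B') (comp (up N beta (vid K (idc B')) (idc B'))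
                        (up N (vid K (idc B')) beta (idc B'))) :=
  cast_cell (@Cell _ K) (comp_idl (idc B')) eq_refl
    (hcomp K (triangle N _ _ _) (triangle N _ _ _)).

Lemma down_comp_cell {A A' B B' D D' : Obj C}
  (alpha : Cell K (idc A') (idc A)) (beta : Cell K (idc B') (idc B))
  (gamma : Cell K (idc D') (idc D)) (f : Hom A B) (g : Hom B D) :
  inhabited (Cell K (comp (down N beta gamma g) (down N alpha beta f))
                    (down N alpha gamma (comp g f))).
Proof.
  pose proof (down_comp beta gamma g (idc B)) as Eg.
  pose proof (down_comp alpha beta (idc B) f) as Ef.
  rewrite comp_idr in Eg; rewrite comp_idl in Ef.
  rewrite <- (down_comp alpha gamma g f), <- Eg, <- Ef, <- !comp_assoc.
  rewrite (comp_assoc (down N beta (vid K (idc B)) (idc B))).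
  exact (inhabits (whisker_into_idc C K _ _ (down_idc_counit beta))).
Qed.

Lemma up_comp_cell {A A' B B' D D' : Obj C}
  (alpha : Cell K (idc A') (idc A)) (beta : Cell K (idc B') (idc B))
  (gamma : Cell K (idc D') (idc D)) (f' : Hom A' B') (g' : Hom B' D') :
  inhabited (Cell K (up N alpha gamma (comp g' f'))
                    (comp (up N beta gamma g') (up N alpha beta f'))).
Proof.
  pose proof (up_comp beta gamma g' (idc B')) as Eg.
  pose proof (up_comp alpha beta (idc B') f') as Ef.
  rewrite comp_idr in Eg; rewrite comp_idl in Ef.
  rewrite <- (up_comp alpha gamma g' f'), <- Eg, <- Ef, <- !comp_assoc.
  rewrite (comp_assoc (up N beta (vid K (idc B')) (idc B'))).
  exact (inhabits (whisker_from_idc C K _ _ (up_idc_unit beta))).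
Qed.

End Lifts.

Theorem proposition1 (G : GenTwoCat) (A A' B B' C C' : Obj (cat1 G))
  (alpha : Cell (cells G) (idc A') (idc A))
  (beta : Cell (cells G) (idc B') (idc B))
  (gamma : Cell (cells G) (idc C') (idc C))
  (f : Hom A B) (g : Hom B C) (f' : Hom A' B') (g' : Hom B' C') :
  inhabited (Cell (cells G)
    (comp (down (ops G) beta gamma g) (down (ops G) alpha beta f))
    (down (ops G) alpha gamma (comp g f))) /\
  inhabited (Cell (cells G)
    (up (ops G) alpha gamma (comp g' f'))
    (comp (up (ops G) beta gamma g') (up (ops G) alpha beta f'))).
Proof.
  split.
  - exact (down_comp_cell _ _ (ops G) alpha beta gamma f g).
  - exact (up_comp_cell _ _ (ops G) alpha beta gamma f' g').
Qed.
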